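(* Consider the stochastic epidemic model described in the context under the linear control policy $u(k)=K\,I(k)$, $k\ge 0$, with a constant gain $K$. Suppose $$\delta_{\max}<\frac{v_{\min}(1-d_{\max})}{v_{\max}}\qquad\text{and}\qquad \frac{\delta_{\max}}{v_{\min}}<K<\frac{1-d_{\max}}{v_{\max}}.$$ Then: (i) $\lim_{k\to\infty} I(k)/I_0=0$ with probability one; (ii) $I(k)<I_0$ for all $k\ge 1$ with probability one. Moreover, if $K=\delta_{\max}/v_{\min}$, then $I(k)\le I_0$ for all $k$ with probability one.
   Context: Time is indexed by days $k=0,1,2,\dots$. Let $(\delta(k))_{k\ge0}$, $(d_I(k))_{k\ge0}$, $(v(k))_{k\ge0}$ be three mutually independent sequences of random variables, each sequence i.i.d. in $k$, with $0\le \delta(k)\le \delta_{\max}$, $0\le d_I(k)\le d_{\max}$ where $d_{\max}<1$, and $0<v_{\min}\le v(k)\le v_{\max}\le 1$; moreover $\delta_{\max}$ lies in the support of $\delta(k)$, $d_{\max}$ in the support of $d_I(k)$, and $v_{\min},v_{\max}$ in the support of $v(k)$. Given a control sequence $u(k)\ge 0$, the susceptible, infected, recovered and deceased cases evolve by $S(k+1)=S(k)-\delta(k)I(k)$, $I(k+1)=(1+\delta(k))I(k)-v(k)u(k)-d_I(k)I(k)$, $R(k+1)=R(k)+v(k)u(k)$, $D(k+1)=D(k)+d_I(k)I(k)$, with initial values $S(0)=S_0$, $I(0)=I_0>0$, $R(0)=D(0)=0$, where $I_0\delta_{\max}<S_0$. *)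

From HB Require Import structures.
From mathcomp Require Import all_boot all_order all_algebra.
From mathcomp Require Import all_classical all_reals all_analysis.
Set Implicit Arguments. Unset Strict Implicit. Unset Printing Implicit Defensive.
Import Order.TTheory GRing.Theory Num.Theory.
Import numFieldNormedType.Exports.
Local Open Scope classical_set_scope.
Local Open Scope ring_scope.

Record sird (R : Type) := SIRD { St : R; It : R; Rt : R; Dt : R }.

Fixpoint sird_traj (T : Type) (R : pzRingType) (delta dI v : nat -> T -> R)
    (pol : R -> R) (S0 I0 : R) (k : nat) (w : T) : sird R :=
  match k with
  | 0 => SIRD S0 I0 0 0
  | k'.+1 =>
    let x := sird_traj delta dI v pol S0 I0 k' w in
    let u := pol (It x) in
    SIRD (St x - delta k' w * It x)
         ((1 + delta k' w) * It x - v k' w * u - dI k' w * It x)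
         (Rt x + v k' w * u)
         (Dt x + dI k' w * It x)
  end.

Definition infected (T : Type) (R : pzRingType) (delta dI v : nat -> T -> R)
    (K S0 I0 : R) (k : nat) (w : T) : R :=
  It (sird_traj delta dI v (fun i => K * i) S0 I0 k w).

Definition epi_family (T : Type) (R : Type) (delta dI v : nat -> T -> R)
    (p : nat * 'I_3) : T -> R :=
  if val p.2 == 0%N then delta p.1 else if val p.2 == 1%N then dI p.1 else v p.1.

Definition mutually_independent d (T : measurableType d) (R : realType)
    (P : probability T R) (I : eqType) (X : I -> T -> R) : Prop :=
  forall (J : seq I) (B : I -> set R), uniq J ->
    (forall i, measurable (B i)) ->
    P (\bigcap_(i in [set` J]) (X i @^-1` B i)) =
    (\prod_(i <- J) P (X i @^-1` B i))%E.

Definition ident_distr d (T : measurableType d) (R : realType)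
    (P : probability T R) (X : nat -> T -> R) : Prop :=
  forall (k : nat) (B : set R), measurable B ->
    P (X k @^-1` B) = P (X 0%N @^-1` B).

Definition in_support d (T : measurableType d) (R : realType)
    (P : probability T R) (X : T -> R) (a : R) : Prop :=
  forall e : R, 0 < e -> (0 < P [set w | (`|X w - a| < e)%R])%E.

From HB Require Import structures.
From mathcomp Require Import all_boot all_order all_algebra.
From mathcomp Require Import all_classical all_reals all_analysis.
From mathcomp Require Import ring lra.
Import Order.TTheory GRing.Theory Num.Theory.
Import numFieldNormedType.Exports.
Local Open Scope classical_set_scope.
Local Open Scope ring_scope.

(* Under the linear policy I(k+1) = (1 + delta(k) - v(k) K - d_I(k)) I(k).
   When 0 <= K <= (1 - d_max) / v_max this factor lies in [0, q], with
   q = 1 + delta_max - v_min K, at every sample point, so 0 <= I(k) <= q^k I0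
   surely; q < 1 when K > delta_max / v_min and q = 1 when K = delta_max / v_min. *)

Lemma infectedS (T : Type) (R : comPzRingType) (delta dI v : nat -> T -> R)
    (K S0 I0 : R) k w :
  infected delta dI v K S0 I0 k.+1 w =
  (1 + delta k w - v k w * K - dI k w) * infected delta dI v K S0 I0 k w.
Proof. rewrite /infected /=; ring. Qed.

Lemma geometric_bound_of_ratio (R : numDomainType) (u a : nat -> R) (q : R) :
    0 <= u 0%N -> (forall k, 0 <= a k <= q) -> (forall k, u k.+1 = a k * u k) ->
  forall k, 0 <= u k <= q ^+ k * u 0%N.
Proof.
move=> u0_ge0 a_bnd uS; elim=> [|k /andP[uk_ge0 uk_le]].
  by rewrite expr0 mul1r lexx u0_ge0.
have /andP[ak_ge0 ak_le] := a_bnd k.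
have q_ge0 : 0 <= q := le_trans ak_ge0 ak_le.
rewrite uS exprS -mulrA mulr_ge0 //=.
apply: le_trans (ler_wpM2l ak_ge0 uk_le) _.
by rewrite ler_wpM2r // mulr_ge0 // exprn_ge0.
Qed.

Lemma geometric_squeeze_cvg0 (R : realType) (u : nat -> R) (c q : R) :
    0 < c -> 0 <= q < 1 -> (forall k, 0 <= u k <= q ^+ k * c) ->
  (fun k => u k / c) @ \oo --> (0 : R).
Proof.
move=> c_gt0 /andP[q_ge0 q_lt1] u_bnd.
apply: (@squeeze_cvgr _ _ _ _ (fun=> 0) (fun k => q ^+ k)); last first.
- by apply: cvg_expr; rewrite ger0_norm.
- exact: cvg_cst.
apply: nearW => k /=; have /andP[uk_ge0 uk_le] := u_bnd k.
by rewrite divr_ge0 ?(ltW c_gt0) //= ler_pdivrMr.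
Qed.

Section linear_policy.
Variables (T : Type) (R : realType) (delta dI v : nat -> T -> R).
Variables (delta_max d_max v_min v_max S0 I0 K : R).
Hypothesis delta_bnd : forall k w, 0 <= delta k w <= delta_max.
Hypothesis dI_bnd : forall k w, 0 <= dI k w <= d_max.
Hypothesis v_bnd : forall k w, v_min <= v k w <= v_max.
Hypothesis I0_gt0 : 0 < I0.
Hypothesis K_ge0 : 0 <= K.
Hypothesis K_v_max : K * v_max <= 1 - d_max.

Let I k w := infected delta dI v K S0 I0 k w.
Let q := 1 + delta_max - v_min * K.

Lemma infected_factor_bnd k w :
  0 <= 1 + delta k w - v k w * K - dI k w <= q.
Proof.
have /andP[delta_ge0 delta_le] := delta_bnd k w.
have /andP[dI_ge0 dI_le] := dI_bnd k w.
have /andP[v_ge v_le] := v_bnd k w.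
have vK_ge : v_min * K <= v k w * K by rewrite ler_wpM2r.
have vK_le : v k w * K <= 1 - d_max.
  by apply: le_trans K_v_max; rewrite mulrC ler_wpM2l.
by rewrite /q; apply/andP; split; lra.
Qed.

Lemma infected_geometric_bnd w k : 0 <= I k w <= q ^+ k * I0.
Proof.
apply: (@geometric_bound_of_ratio _ (I ^~ w)); first exact: ltW.
  by move=> j; apply: infected_factor_bnd w.
by move=> j; apply: infectedS.
Qed.

(* The sample point only witnesses that the bounds on delta, d_I, v are consistent. *)
Lemma infected_rate_ge0 (w : T) : 0 <= q.
Proof. by case/andP: (infected_factor_bnd 0%N w); apply: le_trans. Qed.

Lemma infected_le_I0 w k : delta_max <= v_min * K -> I k w <= I0.
Proof.
move=> rate; have /andP[_ Ik_le] := infected_geometric_bnd w k.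
apply: le_trans Ik_le _; rewrite ler_piMl ?(ltW I0_gt0) //.
by rewrite exprn_ile1 ?(infected_rate_ge0 w) // /q; lra.
Qed.

Lemma infected_lt_I0 w k : delta_max < v_min * K -> (0 < k)%N -> I k w < I0.
Proof.
move=> rate k_gt0; have /andP[_ Ik_le] := infected_geometric_bnd w k.
apply: le_lt_trans Ik_le _.
by rewrite gtr_pMl // exprn_ilt1 ?(infected_rate_ge0 w) -?lt0n // /q; lra.
Qed.

Lemma infected_div_I0_cvg0 w : delta_max < v_min * K ->
  (fun k => I k w / I0) @ \oo --> (0 : R).
Proof.
move=> rate; apply: (@geometric_squeeze_cvg0 _ (I ^~ w) I0 q I0_gt0).
  by rewrite (infected_rate_ge0 w) /= /q; lra.
exact: infected_geometric_bnd.
Qed.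

End linear_policy.

Theorem theorem1 (d : measure_display) (T : measurableType d) (R : realType)
    (P : probability T R) (delta dI v : nat -> T -> R)
    (delta_max d_max v_min v_max S0 I0 : R) :
  (forall k, measurable_fun setT (delta k)) ->
  (forall k, measurable_fun setT (dI k)) ->
  (forall k, measurable_fun setT (v k)) ->
  mutually_independent P (epi_family delta dI v) ->
  ident_distr P delta -> ident_distr P dI -> ident_distr P v ->
  (forall k w, 0 <= delta k w <= delta_max) ->
  (forall k w, 0 <= dI k w <= d_max) ->
  d_max < 1 ->
  (forall k w, v_min <= v k w <= v_max) ->
  0 < v_min -> v_max <= 1 ->
  (forall k, in_support P (delta k) delta_max) ->
  (forall k, in_support P (dI k) d_max) ->
  (forall k, in_support P (v k) v_min) ->
  (forall k, in_support P (v k) v_max) ->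
  0 < I0 -> I0 * delta_max < S0 ->
  delta_max < v_min * (1 - d_max) / v_max ->
  (forall K : R, delta_max / v_min < K < (1 - d_max) / v_max ->
     {ae P, forall w,
        (fun k => infected delta dI v K S0 I0 k w / I0) @ \oo --> (0 : R)}
     /\
     {ae P, forall w, forall k : nat, (1 <= k)%N ->
        infected delta dI v K S0 I0 k w < I0})
  /\
  {ae P, forall w, forall k : nat,
     infected delta dI v (delta_max / v_min) S0 I0 k w <= I0}.
Proof.
move=> _ _ _ _ _ _ _ delta_bnd dI_bnd _ v_bnd v_min_gt0 _ _ _ _ _ I0_gt0 _.
move=> delta_max_small.
have delta_max_ge0 : 0 <= delta_max.
  by case/andP: (delta_bnd 0%N point); apply: le_trans.
have v_max_gt0 : 0 < v_max.
  by case/andP: (v_bnd 0%N point) => /(lt_le_trans v_min_gt0); apply: lt_le_trans.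
have K0_ge0 : 0 <= delta_max / v_min := divr_ge0 delta_max_ge0 (ltW v_min_gt0).
split.
  move=> K /andP[gt_K lt_K].
  have rate : delta_max < v_min * K by rewrite mulrC -ltr_pdivrMr.
  have K_ge0 : 0 <= K := le_trans K0_ge0 (ltW gt_K).
  have K_v_max : K * v_max <= 1 - d_max by rewrite -ler_pdivlMr // ltW.
  split; apply: aeW => w.
    exact: infected_div_I0_cvg0 delta_bnd dI_bnd v_bnd I0_gt0 K_ge0 K_v_max w rate.
  by move=> k; apply: infected_lt_I0 delta_bnd dI_bnd v_bnd I0_gt0 K_ge0 K_v_max w k rate.
apply: aeW => w k.
have rate : v_min * (delta_max / v_min) = delta_max by rewrite mulrC divfK ?gt_eqF.
have K_v_max : delta_max / v_min * v_max <= 1 - d_max.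
  rewrite mulrAC ler_pdivrMr // [_ * v_min]mulrC -ler_pdivlMr //.
  exact: ltW.
by apply: infected_le_I0 delta_bnd dI_bnd v_bnd I0_gt0 K0_ge0 K_v_max w k _; rewrite rate.
Qed.
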